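(* Let $R$ be a commutative Noetherian ring of prime characteristic $p$, $G$ an $x$-torsion-free left $R[x,f]$-module, $\mathfrak{a}$ an ideal of $R$, $L:=\operatorname{ann}_G(\mathfrak{a}R[x,f])$ (so $G/L$ is $x$-torsion-free), and $N$ an $R$-submodule of $G$ with $L\subseteq N\subseteq G$. (i) If $N=\operatorname{ann}_G(\mathfrak{b}R[x,f])$ for an ideal $\mathfrak{b}\subseteq\mathfrak{a}$, then $N/L=\operatorname{ann}_{G/L}((\mathfrak{b}:\mathfrak{a})R[x,f])$; moreover, if $\operatorname{grann}_{R[x,f]}N=\mathfrak{b}R[x,f]$, then $\operatorname{grann}_{R[x,f]}(N/L)=(\mathfrak{b}:\mathfrak{a})R[x,f]$. (ii) If $N/L=\operatorname{ann}_{G/L}(\mathfrak{c}R[x,f])$ for an ideal $\mathfrak{c}$, then $N=\operatorname{ann}_G(\mathfrak{a}\mathfrak{c}R[x,f])=\operatorname{ann}_G((\mathfrak{a}\cap\mathfrak{c})R[x,f])$; moreover, if $\operatorname{grann}_{R[x,f]}L=\mathfrak{a}R[x,f]$ and $\operatorname{grann}_{R[x,f]}(N/L)=\mathfrak{c}R[x,f]$, then $\operatorname{grann}_{R[x,f]}N=(\mathfrak{a}\cap\mathfrak{c})R[x,f]$. (iii) $N\mapsto N/L$ is an order-preserving bijection from the set of special annihilator submodules of $G$ containing $L$ to the set of special annihilator submodules of $G/L$.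
   Context: $R[x,f]$ is the Frobenius skew polynomial ring: free left $R$-module on $(x^i)_{i\ge0}$, $xr=r^px$; for an ideal $\mathfrak{d}$, $\mathfrak{d}R[x,f]=\bigoplus_n\mathfrak{d}x^n$. $x$-torsion-free: $xg=0\Rightarrow g=0$. $\operatorname{ann}_M\mathfrak{B}$ is the set of elements of $M$ killed by $\mathfrak{B}$; special annihilator submodules of $M$ are those of form $\operatorname{ann}_M\mathfrak{B}$ for a graded two-sided ideal $\mathfrak{B}=\bigoplus_n\mathfrak{b}_nx^n$ ($(\mathfrak{b}_n)$ ascending). $\operatorname{grann}N$ is the set of $\sum r_ix^i$ with each $r_ix^i$ annihilating $N$. *)

From HB Require Import structures.
From mathcomp Require Import all_boot all_order all_algebra.
Set Implicit Arguments. Unset Strict Implicit. Unset Printing Implicit Defensive.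
Import GRing.Theory.
Local Open Scope ring_scope.

Section Defs.
Variable R : comNzRingType.

Definition psubset {T : Type} (A B : T -> Prop) := forall t, A t -> B t.
Definition pseteq {T : Type} (A B : T -> Prop) := forall t, A t <-> B t.

Definition ideal (I : R -> Prop) :=
  [/\ I 0, (forall a b, I a -> I b -> I (a + b)) & (forall r a, I a -> I (r * a))].

Definition noetherian :=
  forall I : nat -> R -> Prop, (forall n, ideal (I n)) ->
    (forall n, psubset (I n) (I n.+1)) ->
    exists m, forall n, (m <= n)%N -> psubset (I n) (I m).

Definition colonI (b a : R -> Prop) : R -> Prop := fun r => forall s, a s -> b (r * s).
Definition prodI (a c : R -> Prop) : R -> Prop :=
  fun r => exists s : seq (R * R),
    (forall u, u \in s -> a u.1 /\ c u.2) /\ r = \sum_(u <- s) u.1 * u.2.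
Definition capI (a c : R -> Prop) : R -> Prop := fun r => a r /\ c r.

(* A left R[x,f]-module structure on an R-module G (f the Frobenius r |-> r^p)
   is the same as an additive map x : G -> G with x (r g) = r^p x g. *)
Definition frob_module (p : nat) (G : lmodType R) (xG : G -> G) :=
  (forall g h, xG (g + h) = xG g + xG h) /\
  (forall (r : R) g, xG (r *: g) = r ^+ p *: xG g).

Definition x_torsion_free (G : lmodType R) (xG : G -> G) :=
  forall g, xG g = 0 -> g = 0.

(* Elements of R[x,f] are represented by their coefficient sequences
   s = [:: r_0; r_1; ...] (meaning sum_i r_i x^i); action on G: *)
Definition act (G : lmodType R) (xG : G -> G) (s : seq R) (g : G) : G :=
  \sum_(i < size s) s`_i *: iter i xG g.

(* The graded ideal ⊕_n b_n x^n, and dR[x,f] = ⊕_n d x^n *)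
Definition graded_ideal (B : nat -> R -> Prop) : seq R -> Prop :=
  fun s => forall i, B i s`_i.
Definition extI (d : R -> Prop) : seq R -> Prop := graded_ideal (fun _ => d).

Definition ann (G : lmodType R) (xG : G -> G) (S : seq R -> Prop) : G -> Prop :=
  fun g => forall s, S s -> act xG s g = 0.

Definition grann (G : lmodType R) (xG : G -> G) (N : G -> Prop) : seq R -> Prop :=
  fun s => forall i g, N g -> s`_i *: iter i xG g = 0.

Definition submod (G : lmodType R) (N : G -> Prop) :=
  [/\ N 0, (forall g h, N g -> N h -> N (g + h)) & (forall (r : R) g, N g -> N (r *: g))].

Definition special (G : lmodType R) (xG : G -> G) (M : G -> Prop) :=
  exists B : nat -> R -> Prop,
    [/\ (forall n, ideal (B n)), (forall n, psubset (B n) (B n.+1)) &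
        pseteq M (ann xG (graded_ideal B))].

(* pi : G -> Q is (a presentation of) the quotient map G -> G/L of
   R[x,f]-modules: surjective R[x,f]-linear with kernel exactly L. *)
Definition quotient_map (G Q : lmodType R) (xG : G -> G) (xQ : Q -> Q)
    (pi : G -> Q) (L : G -> Prop) :=
  [/\ (forall g h, pi (g + h) = pi g + pi h),
      (forall (r : R) g, pi (r *: g) = r *: pi g),
      (forall g, pi (xG g) = xQ (pi g)),
      (forall q, exists g, pi g = q) &
      (forall g, pi g = 0 <-> L g)].

Definition img (G Q : lmodType R) (pi : G -> Q) (N : G -> Prop) : Q -> Prop :=
  fun q => exists g, N g /\ pi g = q.

End Defs.

From HB Require Import structures.
From mathcomp Require Import all_boot all_order all_algebra.
Set Implicit Arguments. Unset Strict Implicit. Unset Printing Implicit Defensive.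
Import GRing.Theory.
Local Open Scope ring_scope.

(* An element r x^i g lies in L iff
   t r^(p^j) x^(i+j) g = 0 for all t in a and all j, so g maps into
   ann_(G/L)(cR[x,f]) iff all these products vanish for r in c. Because G is
   x-torsion-free, u^n x^k g = 0 for all k already forces u x^k g = 0 (apply x
   until p^m >= n), so nothing changes when the products t r^(p^j) are replaced
   by the products t r of ac, or by the elements of a ∩ c; this gives (ii).
   Similarly ann_(G/L)((b : a)R[x,f]) is the image of ann_G(bR[x,f]), which is
   (i). Over a Noetherian ring the chain (b_n) defining a special annihilator
   submodule stabilises at some b_m, and ann_G(⊕ b_n x^n) = ann_G(b_m R[x,f])
   (the lower degrees are again reached by applying x), so (iii) reduces to
   (i) and (ii). *)

Lemma ascending_mono (T : Type) (B : nat -> T -> Prop) :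
  (forall n, psubset (B n) (B n.+1)) ->
  forall n k, (n <= k)%N -> psubset (B n) (B k).
Proof.
move=> hB n k /subnK <-; elim: (k - n)%N => [|d IH] t ht //.
by rewrite addSn; apply/hB/IH.
Qed.

Section Ideals.
Variable R : comNzRingType.
Implicit Types (I a b c : R -> Prop) (r s t : R).

Lemma ideal0 I : ideal I -> I 0.
Proof. by case. Qed.

Lemma idealD I r s : ideal I -> I r -> I s -> I (r + s).
Proof. by case=> _ + _; apply. Qed.

Lemma idealMl I r s : ideal I -> I s -> I (r * s).
Proof. by case=> _ _; apply. Qed.

Lemma idealMr I r s : ideal I -> I r -> I (r * s).
Proof. by rewrite mulrC; apply: idealMl. Qed.

Lemma idealX I r n : ideal I -> I r -> (0 < n)%N -> I (r ^+ n).
Proof. by move=> hI hr; case: n => // n _; rewrite exprSr; apply: idealMl. Qed.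

Lemma ideal_colonI b a : ideal b -> ideal (colonI b a).
Proof.
move=> hb; split.
- by move=> s _; rewrite mul0r; apply: ideal0.
- by move=> r r' hr hr' s hs; rewrite mulrDl; apply: idealD; [|apply: hr|apply: hr'].
- by move=> r r' hr' s hs; rewrite -mulrA; apply: idealMl => //; apply: hr'.
Qed.

Lemma ideal_capI a c : ideal a -> ideal c -> ideal (capI a c).
Proof.
move=> ha hc; split.
- by split; apply: ideal0.
- by move=> r s [? ?] [? ?]; split; apply: idealD.
- by move=> r s [? ?]; split; apply: idealMl.
Qed.

Lemma sub_colonI b a : ideal b -> psubset b (colonI b a).
Proof. by move=> hb r hr s _; apply: idealMr. Qed.

Lemma colonI_mulX b a r t n : ideal b -> colonI b a r -> a t -> (0 < n)%N ->
  b (t * r ^+ n).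
Proof.
move=> hb hr ht; case: n => // n _.
by rewrite mulrC exprSr -mulrA; apply: idealMl => //; apply: hr.
Qed.

Lemma prodI0 a c : prodI a c 0.
Proof. by exists [::]; rewrite big_nil. Qed.

Lemma prodIM a c s t : a s -> c t -> prodI a c (s * t).
Proof.
move=> hs ht; exists [:: (s, t)]; split; last by rewrite big_seq1.
by move=> u; rewrite inE => /eqP ->.
Qed.

End Ideals.

Section FrobeniusModule.
Variables (R : comNzRingType) (p : nat) (V : lmodType R) (xV : V -> V).
Hypothesis p_gt1 : (1 < p)%N.
Hypothesis xV_frob : frob_module p xV.

Definition monomial (i : nat) (r : R) : seq R := rcons (nseq i 0) r.

Lemma nth_monomial i r k : (monomial i r)`_k = if k == i then r else 0.
Proof.
rewrite /monomial nth_rcons size_nseq nth_nseq; case: ifP => [lt|//].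
by rewrite if_same (ltn_eqF lt).
Qed.

Lemma act_monomial i r g : act xV (monomial i r) g = r *: iter i xV g.
Proof.
rewrite /act size_rcons size_nseq big_ord_recr /= nth_monomial eqxx big1 ?add0r //.
by move=> k _; rewrite nth_monomial (ltn_eqF (ltn_ord k)) scale0r.
Qed.

Lemma iter_frobD i g h : iter i xV (g + h) = iter i xV g + iter i xV h.
Proof. by case: xV_frob => xD _; elim: i => //= i ->; apply: xD. Qed.

Lemma iter_frob0 i : iter i xV 0 = 0.
Proof. by apply: (@addrI _ (iter i xV 0)); rewrite addr0 -iter_frobD addr0. Qed.

Lemma iter_frobZ i r g : iter i xV (r *: g) = r ^+ (p ^ i) *: iter i xV g.
Proof.
case: xV_frob => _ xZ; elim: i => [|i IH] /=; first by rewrite expn0 expr1.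
by rewrite IH xZ -exprM expnSr.
Qed.

Lemma ann_gradedP (B : nat -> R -> Prop) g : (forall n, B n 0) ->
  ann xV (graded_ideal B) g <-> (forall i r, B i r -> r *: iter i xV g = 0).
Proof.
move=> B0; split=> [h i r hr | h s hs].
- by rewrite -act_monomial; apply: h => k; rewrite nth_monomial; case: eqP => [->|].
- by rewrite /act big1 // => k _; apply: h.
Qed.

Lemma ann_extIP (b : R -> Prop) g : b 0 ->
  ann xV (extI b) g <-> (forall i r, b r -> r *: iter i xV g = 0).
Proof. by move=> b0; apply: (@ann_gradedP (fun=> b) g (fun=> b0)). Qed.

Lemma grann_extIP (N : V -> Prop) (d : R -> Prop) : d 0 ->
  pseteq (grann xV N) (extI d) <->
  (forall i r, d r <-> (forall g, N g -> r *: iter i xV g = 0)).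
Proof.
move=> d0; split=> [H i r | H s]; last first.
  split=> [h i | h i g hg]; first by apply/H => g; apply: h.
  exact: (H i _).1 (h i) g hg.
split=> [hr g hg | h].
- have /(_ i g hg) : grann xV N (monomial i r).
    by apply/H => k; rewrite nth_monomial; case: eqP.
  by rewrite nth_monomial eqxx.
- have /(_ i) : extI d (monomial i r).
    apply/H => k g hg; rewrite nth_monomial.
    by case: eqP => [->|_]; [apply: h | apply: scale0r].
  by rewrite nth_monomial eqxx.
Qed.

Lemma ann_graded_submod (B : nat -> R -> Prop) : (forall n, B n 0) ->
  submod (ann xV (graded_ideal B)).
Proof.
move=> B0; split.
- by apply/(ann_gradedP _ B0) => i r _; rewrite iter_frob0 scaler0.
- move=> g h /(ann_gradedP _ B0) hg /(ann_gradedP _ B0) hh.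
  by apply/(ann_gradedP _ B0) => i r hr; rewrite iter_frobD scalerDr hg // hh // addr0.
- move=> s g /(ann_gradedP _ B0) hg; apply/(ann_gradedP _ B0) => i r hr.
  by rewrite iter_frobZ scalerA mulrC -scalerA hg // scaler0.
Qed.

Lemma submod_ext (M M' : V -> Prop) : pseteq M M' -> submod M' -> submod M.
Proof.
move=> E [h0 hD hZ]; split; first exact/E.
- by move=> g h /E hg /E hh; apply/E/hD.
- by move=> r g /E hg; apply/E/hZ.
Qed.

Lemma special_submod (M : V -> Prop) : special xV M -> submod M.
Proof.
case=> B [hB _ E]; apply: submod_ext E _.
by apply: ann_graded_submod => n; apply: ideal0.
Qed.

Hypothesis xV_tf : x_torsion_free xV.

Lemma iter_tf n g : iter n xV g = 0 -> g = 0.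
Proof. by elim: n => //= n IH /xV_tf; apply: IH. Qed.

Lemma scale_iter_eq0_expr u n g : (forall k, u ^+ n *: iter k xV g = 0) ->
  forall k, u *: iter k xV g = 0.
Proof.
move=> h k; apply: (@iter_tf n); rewrite iter_frobZ -iterD.
by rewrite -(subnK (ltnW (ltn_expl n p_gt1))) exprD -scalerA h scaler0.
Qed.

Lemma ann_graded_extI (B : nat -> R -> Prop) m : (forall n, ideal (B n)) ->
  (forall n, psubset (B n) (B n.+1)) -> (forall n, psubset (B n) (B m)) ->
  pseteq (ann xV (graded_ideal B)) (ann xV (extI (B m))).
Proof.
move=> hB hBS sub g; have B0 n : B n 0 by apply: ideal0.
split=> [/(ann_gradedP _ B0) h | /(ann_extIP _ (B0 m)) h].
- apply/(ann_extIP _ (B0 m)) => k r hr.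
  have [le|lt] := leqP m k; first exact/h/(ascending_mono hBS le).
  apply: (@iter_tf (m - k)); rewrite iter_frobZ -iterD subnK ?(ltnW lt) //.
  by apply: h; apply: idealX => //; rewrite expn_gt0 ltnW.
- by apply/(ann_gradedP _ B0) => k r /sub; apply: h.
Qed.

Lemma special_ann_extI (M : V -> Prop) : noetherian R -> special xV M ->
  exists2 b, ideal b & pseteq M (ann xV (extI b)).
Proof.
move=> noethR [B [hB hBS E]]; have [m hm] := noethR B hB hBS.
have sub n : psubset (B n) (B m).
  by have [/(ascending_mono hBS)|/ltnW/hm] := leqP n m.
exists (B m) => // g; apply: iff_trans (E g) _; exact: ann_graded_extI.
Qed.

End FrobeniusModule.

Section Quotient.
Variables (R : comNzRingType) (p : nat) (G Q : lmodType R).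
Variables (xG : G -> G) (xQ : Q -> Q) (pi : G -> Q) (a : R -> Prop).
Hypothesis p_gt1 : (1 < p)%N.
Hypothesis xG_frob : frob_module p xG.
Hypothesis xG_tf : x_torsion_free xG.
Hypothesis xQ_frob : frob_module p xQ.
Hypothesis a_ideal : ideal a.

Local Notation L := (ann xG (extI a)).

Hypothesis pi_quot : quotient_map xG xQ pi L.

Lemma quot_mapD g h : pi (g + h) = pi g + pi h. Proof. by case: pi_quot. Qed.
Lemma quot_mapZ r g : pi (r *: g) = r *: pi g. Proof. by case: pi_quot. Qed.
Lemma quot_mapX g : pi (xG g) = xQ (pi g). Proof. by case: pi_quot. Qed.
Lemma quot_map_surj q : exists g, pi g = q. Proof. by case: pi_quot. Qed.
Lemma quot_map_eq0 g : pi g = 0 <-> L g. Proof. by case: pi_quot. Qed.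

Lemma quot_map0 : pi 0 = 0.
Proof. by rewrite -(scale0r 0) quot_mapZ scale0r. Qed.

Lemma quot_mapB g h : pi (g - h) = pi g - pi h.
Proof. by rewrite quot_mapD -scaleN1r quot_mapZ scaleN1r. Qed.

Lemma quot_map_iter i g : pi (iter i xG g) = iter i xQ (pi g).
Proof. by elim: i => //= i <-; rewrite quot_mapX. Qed.

Lemma quot_map_eq g h : pi g = pi h -> L (g - h).
Proof. by move=> E; apply/quot_map_eq0; rewrite quot_mapB E subrr. Qed.

Lemma memLP g : L g <-> forall j t, a t -> t *: iter j xG g = 0.
Proof. exact: ann_extIP (ideal0 a_ideal). Qed.

Lemma quot_x_torsion_free : x_torsion_free xQ.
Proof.
move=> q; have [g <- xg0] := quot_map_surj q.
apply/quot_map_eq0/memLP => j t ht; apply: xG_tf.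
have /memLP/(_ j (t ^+ p)) : L (xG g) by apply/quot_map_eq0; rewrite quot_mapX.
case: xG_frob => _ ->; rewrite -iterSr; apply.
by apply: idealX => //; rewrite ltnW.
Qed.

Lemma quot_map_fiber (N : G -> Prop) : submod N -> psubset L N ->
  forall g, N g <-> img pi N (pi g).
Proof.
move=> [_ hD _] hLN g; split=> [hg | [h [hh /esym/quot_map_eq Lgh]]]; first by exists g.
by rewrite -(subrK h g); apply: hD => //; apply: hLN.
Qed.

Lemma memL_scale_iterP r i g : L (r *: iter i xG g) <->
  forall j t, a t -> (t * r ^+ (p ^ j)) *: iter (j + i) xG g = 0.
Proof.
apply: iff_trans (memLP _) _.
by split=> h j t ht; have := h j t ht; rewrite (iter_frobZ xG_frob) iterD scalerA.
Qed.

Lemma ann_quot_mapP (c : R -> Prop) g : c 0 ->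
  ann xQ (extI c) (pi g) <-> forall i r, c r -> L (r *: iter i xG g).
Proof.
move=> c0; apply: iff_trans (ann_extIP xQ (pi g) c0) _.
by split=> h i r hr; [apply/quot_map_eq0 | have /quot_map_eq0 := h i r hr];
  rewrite quot_mapZ quot_map_iter // h.
Qed.

Lemma ann_quot_map_expandP (c : R -> Prop) g : c 0 ->
  ann xQ (extI c) (pi g) <->
  forall i r j t, c r -> a t -> (t * r ^+ (p ^ j)) *: iter (j + i) xG g = 0.
Proof.
move=> c0; apply: iff_trans (ann_quot_mapP g c0) _; split=> h i r.
- by move=> j t hr ht; apply: (memL_scale_iterP r i g).1 (h i r hr) j t ht.
- by move=> hr; apply/memL_scale_iterP => j t; apply: h.
Qed.

Lemma ann_quot_map_capI (c : R -> Prop) g : ideal c ->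
  ann xQ (extI c) (pi g) <-> ann xG (extI (capI a c)) g.
Proof.
move=> hc; have ac0 := ideal0 (ideal_capI a_ideal hc).
apply: iff_trans (ann_quot_map_expandP g (ideal0 hc))
  (iff_trans _ (iff_sym (ann_extIP xG g ac0))).
split=> h.
- move=> k u [ua uc]; apply: (scale_iter_eq0_expr p_gt1 xG_frob xG_tf (n := 2)) => k'.
  by have := h k' u 0%N u uc ua; rewrite expn0 expr1 add0n expr2.
- move=> i r j t hr ht; apply: h; split; first exact: idealMr.
  by apply: idealMl => //; apply: idealX => //; rewrite expn_gt0 ltnW.
Qed.

Lemma ann_quot_map_prodI (c : R -> Prop) g : ideal c ->
  ann xQ (extI c) (pi g) <-> ann xG (extI (prodI a c)) g.
Proof.
move=> hc; apply: iff_trans (ann_quot_map_expandP g (ideal0 hc))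
  (iff_trans _ (iff_sym (ann_extIP xG g (prodI0 a c)))).
split=> h.
- move=> k u [s [hs ->]]; rewrite scaler_suml big1_seq // => v /hs [va vc].
  by have := h k v.2 0%N v.1 vc va; rewrite expn0 expr1 add0n.
- move=> i r j t hr ht; apply/h/prodIM => //.
  by apply: idealX => //; rewrite expn_gt0 ltnW.
Qed.

Lemma img_ann_colonI (b : R -> Prop) (M : G -> Prop) : ideal b -> psubset L M ->
  pseteq M (ann xG (extI b)) -> pseteq (img pi M) (ann xQ (extI (colonI b a))).
Proof.
move=> hb hLM E q; have b0 := ideal0 hb; have ba0 := ideal0 (ideal_colonI a hb).
split=> [[g [/E /(ann_extIP _ _ b0) Mg <-]] | ].
- apply/(ann_quot_mapP _ ba0) => i r hr; apply/memL_scale_iterP => j t ht.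
  by apply: Mg; apply: colonI_mulX hb hr ht _; rewrite expn_gt0 ltnW.
- have [g <- /(ann_quot_mapP _ ba0) h] := quot_map_surj q; exists g; split=> //.
  apply/E/(ann_extIP _ _ b0) => i u hu.
  apply: (scale_iter_eq0_expr p_gt1 xG_frob xG_tf (n := 2)) => k.
  have /hLM/E/(ann_extIP _ _ b0)/(_ 0%N u hu) := h k u (sub_colonI hb hu).
  by rewrite /= scalerA expr2.
Qed.

Lemma grann_img_colonI (b : R -> Prop) (N : G -> Prop) : ideal b ->
  pseteq (grann xG N) (extI b) -> pseteq (grann xQ (img pi N)) (extI (colonI b a)).
Proof.
move=> hb /(grann_extIP _ _ (ideal0 hb)) E.
apply/(grann_extIP _ _ (ideal0 (ideal_colonI a hb))) => i r; split.
- move=> hr _ [g [Ng <-]]; rewrite -(quot_map_iter i) -quot_mapZ.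
  apply/quot_map_eq0/memL_scale_iterP => j t ht.
  by apply: (E _ _).1 Ng; apply: colonI_mulX hb hr ht _; rewrite expn_gt0 ltnW.
- move=> h t ht; apply/(E i _) => g Ng; rewrite mulrC.
  have /quot_map_eq0/memL_scale_iterP/(_ 0%N t ht) : pi (r *: iter i xG g) = 0.
    by rewrite quot_mapZ quot_map_iter; apply: h; exists g.
  by rewrite expn0 expr1.
Qed.

Lemma submod_ann_prodI_capI (N : G -> Prop) (c : R -> Prop) : ideal c ->
  submod N -> psubset L N -> pseteq (img pi N) (ann xQ (extI c)) ->
  pseteq N (ann xG (extI (prodI a c))) /\ pseteq N (ann xG (extI (capI a c))).
Proof.
move=> hc hN hLN E; have F g := iff_trans (quot_map_fiber hN hLN g) (E (pi g)).
split=> g; apply: iff_trans (F g) _;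
  [exact: ann_quot_map_prodI | exact: ann_quot_map_capI].
Qed.

Lemma grann_capI (N : G -> Prop) (c : R -> Prop) : ideal c -> psubset L N ->
  pseteq (grann xG L) (extI a) -> pseteq (grann xQ (img pi N)) (extI c) ->
  pseteq (grann xG N) (extI (capI a c)).
Proof.
move=> hc hLN /(grann_extIP _ _ (ideal0 a_ideal)) EL.
move=> /(grann_extIP _ _ (ideal0 hc)) EN.
apply/(grann_extIP _ _ (ideal0 (ideal_capI a_ideal hc))) => i r; split.
- move=> [ra rc] g Ng; apply: (scale_iter_eq0_expr p_gt1 xG_frob xG_tf (n := 2)) => k.
  have /quot_map_eq0/memL_scale_iterP/(_ 0%N r ra) : pi (r *: iter k xG g) = 0.
    by rewrite quot_mapZ quot_map_iter; apply: (proj1 (EN k r) rc); exists g.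
  by rewrite expn0 expr1 add0n expr2.
- move=> h; split; first by apply/(EL i) => g /hLN; apply: h.
  apply/(EN i) => _ [g [Ng <-]].
  by rewrite -(quot_map_iter i) -quot_mapZ h // quot_map0.
Qed.

Lemma img_subset (M1 M2 : G -> Prop) :
  psubset M1 M2 -> psubset (img pi M1) (img pi M2).
Proof. by move=> sub _ [g [M1g <-]]; exists g; split=> //; apply: sub. Qed.

Lemma special_img (M : G -> Prop) : noetherian R -> special xG M -> psubset L M ->
  special xQ (img pi M).
Proof.
move=> noethR sM hLM; have [b hb E] := special_ann_extI p_gt1 xG_frob xG_tf noethR sM.
exists (fun=> colonI b a); split; [by move=> n; apply: ideal_colonI | by move=> n t |].
exact: img_ann_colonI hb hLM E.
Qed.

Lemma img_subset_special (M1 M2 : G -> Prop) : special xG M2 -> psubset L M2 ->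
  psubset (img pi M1) (img pi M2) -> psubset M1 M2.
Proof.
move=> sM2 hLM2 sub g M1g; apply/(quot_map_fiber (special_submod xG_frob sM2) hLM2).
by apply: sub; exists g.
Qed.

Lemma special_preimage (M' : Q -> Prop) : noetherian R -> special xQ M' ->
  special xG (fun g => M' (pi g)).
Proof.
move=> noethR sM'.
have [c hc E] := special_ann_extI p_gt1 xQ_frob quot_x_torsion_free noethR sM'.
exists (fun=> capI a c); split; [by move=> n; apply: ideal_capI | by move=> n t |].
by move=> g; apply: iff_trans (E (pi g)) (ann_quot_map_capI g hc).
Qed.

Lemma L_sub_preimage (M' : Q -> Prop) : M' 0 -> psubset L (fun g => M' (pi g)).
Proof. by move=> M'0 g /quot_map_eq0 ->. Qed.

Lemma img_preimage (M' : Q -> Prop) : pseteq (img pi (fun g => M' (pi g))) M'.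
Proof.
move=> q; split=> [[g [? <-]] // | M'q].
by have [g E] := quot_map_surj q; exists g; rewrite E.
Qed.

End Quotient.

Theorem proposition3p3 (p : nat) (R : comNzRingType) (G Q : lmodType R)
  (xG : G -> G) (xQ : Q -> Q) (pi : G -> Q) (a : R -> Prop) (N : G -> Prop) :
  prime p -> p \in [pchar R] -> noetherian R ->
  frob_module p xG -> x_torsion_free xG -> frob_module p xQ ->
  ideal a ->
  quotient_map xG xQ pi (ann xG (extI a)) ->
  submod N -> psubset (ann xG (extI a)) N ->
  (* G/L is x-torsion-free *)
  x_torsion_free xQ /\
  (* (i) *)
  (forall b : R -> Prop, ideal b -> psubset b a ->
     pseteq N (ann xG (extI b)) ->
     pseteq (img pi N) (ann xQ (extI (colonI b a))) /\
     (pseteq (grann xG N) (extI b) ->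
        pseteq (grann xQ (img pi N)) (extI (colonI b a)))) /\
  (* (ii) *)
  (forall c : R -> Prop, ideal c ->
     pseteq (img pi N) (ann xQ (extI c)) ->
     pseteq N (ann xG (extI (prodI a c))) /\
     pseteq N (ann xG (extI (capI a c))) /\
     (pseteq (grann xG (ann xG (extI a))) (extI a) ->
      pseteq (grann xQ (img pi N)) (extI c) ->
      pseteq (grann xG N) (extI (capI a c)))) /\
  (* (iii) N |-> N/L is an order-preserving bijection
     {special M of G with L <= M} -> {special M' of G/L} *)
  ((forall M : G -> Prop, special xG M -> psubset (ann xG (extI a)) M ->
      special xQ (img pi M)) /\
   (forall M1 M2 : G -> Prop, special xG M1 -> psubset (ann xG (extI a)) M1 ->
      special xG M2 -> psubset (ann xG (extI a)) M2 ->
      pseteq (img pi M1) (img pi M2) -> pseteq M1 M2) /\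
   (forall M' : Q -> Prop, special xQ M' ->
      exists M : G -> Prop, [/\ special xG M, psubset (ann xG (extI a)) M &
                               pseteq (img pi M) M']) /\
   (forall M1 M2 : G -> Prop, special xG M1 -> psubset (ann xG (extI a)) M1 ->
      special xG M2 -> psubset (ann xG (extI a)) M2 ->
      psubset M1 M2 -> psubset (img pi M1) (img pi M2))).
Proof.
move=> /prime_gt1 p_gt1 _ noethR xG_frob xG_tf xQ_frob a_ideal pi_quot N_submod LsubN.
split; first exact: (quot_x_torsion_free p_gt1 xG_frob xG_tf a_ideal pi_quot).
split.
  move=> b hb _ E; split.
    exact: (img_ann_colonI p_gt1 xG_frob xG_tf a_ideal pi_quot hb LsubN E).
  exact: (grann_img_colonI p_gt1 xG_frob a_ideal pi_quot hb).
split.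
  move=> c hc E.
  have [Eprod Ecap] :=
    submod_ann_prodI_capI p_gt1 xG_frob xG_tf a_ideal pi_quot hc N_submod LsubN E.
  by do 2!split=> //; apply: (grann_capI p_gt1 xG_frob xG_tf a_ideal pi_quot hc LsubN).
split.
  by move=> M; apply: (special_img p_gt1 xG_frob xG_tf a_ideal pi_quot noethR).
have img_le M1 M2 := img_subset_special (M1 := M1) (M2 := M2) xG_frob pi_quot.
split.
  by move=> M1 M2 sM1 LM1 sM2 LM2 E g; split; apply: img_le => // q /E.
split; last by move=> M1 M2 _ _ _ _; apply: img_subset.
move=> M' sM'; have [M'0 _ _] := special_submod xQ_frob sM'.
exists (fun g => M' (pi g)); split; last exact: (img_preimage pi_quot M').
- exact: (special_preimage p_gt1 xG_frob xG_tf xQ_frob a_ideal pi_quot noethR sM').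
- exact: (L_sub_preimage pi_quot M'0).
Qed.
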